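(* Let $n\ge1$, $0\le\epsilon<\tfrac12$, $t\ge 1$ an integer, and let $f:\{0,1\}^n\to\{0,1\}$ be $\epsilon$-far from the set $A_n$ of $n$-variable affine functions. Let $a^{(0)},a^{(1)},\dots,a^{(t)}$ be independent random elements of $\{0,1\}^n$, each distributed according to $\Pr[a^{(i)}=z]=NW_f(z)^2$ (the outcome distribution of measuring $\mathcal{D}_f|0\rangle^{\otimes n}$ in the computational basis). Then $$\Pr\big[a^{(i)}=a^{(0)}\text{ for all }i=1,\dots,t\big]\le(1-2\epsilon)^t.$$ Consequently, the procedure that reports ''$f$ is not affine'' iff some $a^{(i)}\ne a^{(0)}$ errs on such $f$ with probability at most $(1-2\epsilon)^t$, and always answers correctly when $f$ is affine.
   Context: For $x,a\in\{0,1\}^n$, $a\cdot x=a_1x_1\oplus\cdots\oplus a_nx_n$. The set $A_n$ of affine functions consists of all functions $x\mapsto a_0\oplus a\cdot x$ with $a_0\in\{0,1\}$, $a\in\{0,1\}^n$. The normalized Walsh transform is $NW_f(\omega)=2^{-n}\sum_{x}(-1)^{f(x)\oplus\omega\cdot x}$, and $\sum_\omega NW_f(\omega)^2=1$. With $U_f|x\rangle=(-1)^{f(x)}|x\rangle$ and $H$ the Hadamard gate, $\mathcal{D}_f=H^{\otimes n}U_fH^{\otimes n}$ satisfies $\mathcal{D}_f|0\rangle^{\otimes n}=\sum_z NW_f(z)|z\rangle$. $f$ is $\epsilon$-far from $A_n$ if $|\{x:f(x)\ne g(x)\}|\ge\epsilon2^n$ for every $g\in A_n$. *)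

From HB Require Import structures.
From mathcomp Require Import all_boot all_order all_algebra.
Set Implicit Arguments. Unset Strict Implicit. Unset Printing Implicit Defensive.
Import Order.TTheory GRing.Theory Num.Theory.
Local Open Scope ring_scope.

Definition BV (n : nat) := {ffun 'I_n -> bool}.

Definition dotb (n : nat) (a x : BV n) : bool :=
  \big[addb/false]_(i < n) (a i && x i).

Definition affine_fun (n : nat) (a0 : bool) (a : BV n) : BV n -> bool :=
  fun x => addb a0 (dotb a x).

Definition NW (R : realFieldType) (n : nat) (f : BV n -> bool) (w : BV n) : R :=
  (2%:R ^+ n)^-1 * \sum_(x : BV n) (-1) ^+ (addb (f x) (dotb w x)).

Definition eps_far (R : realFieldType) (n : nat) (f : BV n -> bool) (eps : R) : Prop :=
  forall (a0 : bool) (a : BV n),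
    eps * 2%:R ^+ n <= (#|[set x : BV n | f x != affine_fun a0 a x]|)%:R.

(* Probability that a^(1),...,a^(t) all equal a^(0), where a^(0..t) are
   independent with Pr[a^(i) = z] = NW_f(z)^2: sum over all outcome tuples
   s : 'I_(t+1) -> {0,1}^n with all entries equal of the product probability. *)
Definition prob_all_equal (R : realFieldType) (n : nat) (f : BV n -> bool) (t : nat) : R :=
  \sum_(s : {ffun 'I_t.+1 -> BV n} | [forall i : 'I_t.+1, s i == s ord0])
     \prod_(i < t.+1) (NW R f (s i)) ^+ 2.

(* Measuring D_f|0...0> yields z with probability NW_f(z)^2, so the probability
   that t+1 independent samples coincide is  sum_z (NW_f(z)^2)^(t+1).  The proof
   rests on two facts about the normalized Walsh transform:
   - Parseval: sum_z NW_f(z)^2 = 1, derived from the orthogonality of the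
     characters chi_w(x) = (-1)^(w.x) of the group ({0,1}^n, xor);
   - if f is eps-far from every affine function then |NW_f(z)| <= 1 - 2 eps,
     because 2^n NW_f(z) = 2^n - 2 d(f, z.x) and d(f, z.x), d(f, 1 (+) z.x)
     are both at least eps 2^n.
   A probability vector whose entries are all at most b has collision
   probability of order t+1 at most b^t; applied with b = (1-2eps)^2 <= 1-2eps
   this gives the bound.  For an affine g = a0 (+) a.x the spectrum NW_g^2 is the
   point mass at a, so all samples agree with probability 1. *)

From HB Require Import structures.
From mathcomp Require Import all_boot all_order all_algebra.
From mathcomp Require Import lra.
Import Order.TTheory GRing.Theory Num.Theory.
Local Open Scope ring_scope.
Set Implicit Arguments. Unset Strict Implicit.

Definition bxor n (u v : BV n) : BV n := [ffun i => u i (+) v i].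

Lemma dotb_xorl n (u v x : BV n) : dotb (bxor u v) x = dotb u x (+) dotb v x.
Proof.
rewrite /dotb -big_split /=; apply: eq_bigr => i _; rewrite ffunE.
by case: (u i) (v i) (x i) => [] [] [].
Qed.

Lemma dotb_sym n (u x : BV n) : dotb u x = dotb x u.
Proof. by apply: eq_bigr => i _; rewrite andbC. Qed.

Lemma card_BV n : #|{: BV n}| = (2 ^ n)%N.
Proof. by rewrite card_ffun card_bool card_ord. Qed.

Section WalshAnalysis.

Variable R : realFieldType.

Definition chi n (w x : BV n) : R := (-1) ^+ dotb w x.

Lemma chiM n (w z x : BV n) : chi w x * chi z x = chi (bxor w z) x.
Proof. by rewrite /chi dotb_xorl signr_addb. Qed.

(* A nontrivial character sums to zero: translating by a basis vector e_i
   with v_i = 1 flips the sign of every term while permuting them. *)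
Lemma sum_chi_nz n (v : BV n) :
  v != [ffun=> false] -> \sum_(x : BV n) chi v x = 0.
Proof.
move=> hv.
have [i vi] : exists i, v i.
  apply/existsP; apply: contraR hv; rewrite negb_exists => /forallP h.
  by apply/eqP/ffunP => j; rewrite ffunE; apply/negbTE/h.
pose e : BV n := [ffun j => j == i].
have dot_ve : dotb v e = true.
  rewrite /dotb (bigD1 i) //= ffunE eqxx vi /= big1 // => j /negbTE hj.
  by rewrite ffunE hj andbF.
have shift_inj : injective (fun x => bxor x e).
  move=> x y /ffunP h; apply/ffunP => j; move: (h j); rewrite !ffunE.
  by move=> /(congr1 (addb^~ (j == i))); rewrite -!addbA addbb !addbF.
have sum_opp : \sum_(x : BV n) chi v x = - \sum_(x : BV n) chi v x.
  rewrite {1}(reindex_inj shift_inj) -sumrN; apply: eq_bigr => x _.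
  by rewrite /chi dotb_sym dotb_xorl (dotb_sym e) dot_ve signr_addb mulrN1 dotb_sym.
lra.
Qed.

Lemma chi_orth n (w z : BV n) :
  \sum_(x : BV n) chi w x * chi z x = if w == z then (2 ^ n)%:R else 0.
Proof.
under eq_bigr do rewrite chiM.
case: eqP => [->|hne].
  rewrite (eq_bigr (fun _ => 1)) ?sumr_const ?card_BV // => x _.
  rewrite /chi /dotb big1 // => i _; by rewrite ffunE addbb.
apply: sum_chi_nz; apply/eqP => h; apply: hne; apply/ffunP => i.
by move/ffunP: h => /(_ i); rewrite !ffunE; case: (w i) (z i) => [] [].
Qed.

Lemma plancherel n (s : BV n -> R) :
  \sum_(w : BV n) (\sum_(x : BV n) s x * chi w x) ^+ 2 =
  (2 ^ n)%:R * \sum_(x : BV n) s x ^+ 2.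
Proof.
under eq_bigr do rewrite expr2 mulr_suml.
under eq_bigr do under eq_bigr do rewrite mulr_sumr.
rewrite exchange_big /= mulr_sumr; apply: eq_bigr => x _.
rewrite exchange_big /= (bigD1 x) //= [X in _ + X]big1 ?addr0 => [|y hy].
  under eq_bigr do rewrite mulrACA.
  rewrite -mulr_sumr; under eq_bigr do rewrite /chi (dotb_sym _ x).
  by rewrite (chi_orth x x) eqxx expr2 mulrC.
under eq_bigr do rewrite mulrACA.
rewrite -mulr_sumr; under eq_bigr do rewrite /chi (dotb_sym _ x) (dotb_sym _ y).
by rewrite (chi_orth x y) eq_sym (negbTE hy) mulr0.
Qed.

Lemma NWE n (f : BV n -> bool) w :
  NW R f w = (2%:R ^+ n)^-1 * \sum_(x : BV n) (-1) ^+ f x * chi w x.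
Proof. by rewrite /NW; congr (_ * _); apply: eq_bigr => x _; rewrite signr_addb. Qed.

Lemma parseval n (f : BV n -> bool) : \sum_(w : BV n) NW R f w ^+ 2 = 1.
Proof.
under eq_bigr do rewrite NWE exprMn.
rewrite -mulr_sumr plancherel (eq_bigr (fun _ => 1)) => [|x _]; last first.
  by rewrite sqrr_sign.
rewrite sumr_const card_BV -natrX.
have h2n : (2 ^ n)%:R != 0 :> R by rewrite pnatr_eq0 expn_eq0.
by rewrite expr2 mulrACA mulVf // mulr1.
Qed.

Lemma sum_sign_card n (b : BV n -> bool) :
  \sum_(x : BV n) ((-1) ^+ b x : R) = (2 ^ n)%:R - 2%:R * #|[set x | b x]|%:R.
Proof.
have -> : \sum_(x : BV n) ((-1) ^+ b x : R) =
          \sum_(x : BV n) (1 - 2%:R * (nat_of_bool (b x))%:R).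
  by apply: eq_bigr => x _; case: (b x) => /=; rewrite ?mulr0 ?mulr1 ?subr0 //; lra.
rewrite sumrB sumr_const card_BV -mulr_sumr -natr_sum; congr (_ - _ * _%:R).
rewrite cardsE -sum1_card [RHS]big_mkcond /=.
by apply: eq_bigr => x _; rewrite unfold_in; case: (b x).
Qed.

(* Distance to an affine function controls a Walsh coefficient:
   |NW_f(w)| <= 1 - 2 eps when f is eps-far from both w.x and 1 (+) w.x. *)
Lemma NW_far_bound n (eps : R) (f : BV n -> bool) (hfar : eps_far f eps) w :
  NW R f w ^+ 2 <= (1 - 2%:R * eps) ^+ 2.
Proof.
set N : R := 2%:R ^+ n.
have hN : 0 < N by apply: exprn_gt0; rewrite ltr0n.
set D := [set x | f x (+) dotb w x]; set d := #|D|.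
have far0 := hfar false w; have far1 := hfar true w.
have D0 : [set x | f x != affine_fun false w x] = D.
  by apply/setP => x; rewrite !inE /affine_fun; case: (f x) (dotb w x) => [] [].
have D1 : [set x | f x != affine_fun true w x] = ~: D.
  by apply/setP => x; rewrite !inE /affine_fun; case: (f x) (dotb w x) => [] [].
have cardDC : (#|~: D|%:R : R) = N - d%:R.
  by rewrite /N -natrX -card_BV -(cardsC D) natrD addrAC subrr add0r.
rewrite D1 cardDC -/N in far1; rewrite D0 -/d -/N in far0.
have NW_d : NW R f w * N = N - 2%:R * d%:R.
  by rewrite /NW sum_sign_card mulrAC mulVf ?gt_eqF // mul1r natrX.
have lo : -(1 - 2%:R * eps) <= NW R f w by rewrite -(ler_pM2r hN) NW_d; lra.
have hi : NW R f w <= 1 - 2%:R * eps by rewrite -(ler_pM2r hN) NW_d; lra.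
have NW_le : `|NW R f w| <= 1 - 2%:R * eps by rewrite ler_norml lo hi.
by rewrite -real_normK ?num_real // lerXn2r ?nnegrE ?(le_trans _ NW_le).
Qed.

Lemma NW_affine n a0 (a z : BV n) :
  NW R (affine_fun a0 a) z ^+ 2 = if a == z then 1 else 0.
Proof.
rewrite NWE.
under eq_bigr do rewrite /affine_fun signr_addb -/(chi a _) -mulrA.
rewrite -mulr_sumr chi_orth.
have h2n : (2 ^ n)%:R != 0 :> R by rewrite pnatr_eq0 expn_eq0.
case: eqP => _; last by rewrite !mulr0 expr0n.
by rewrite natrX in h2n *; rewrite mulrCA mulVf // mulr1 sqrr_sign.
Qed.

Lemma collision_bound (T : finType) (p : T -> R) (b : R) t :
  (forall z, 0 <= p z) -> (forall z, p z <= b) -> \sum_z p z = 1 ->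
  \sum_z p z ^+ t.+1 <= b ^+ t.
Proof.
move=> p_ge0 p_le sum_p.
apply: (@le_trans _ _ (\sum_z p z * b ^+ t)).
  apply: ler_sum => z _; rewrite exprS; apply: ler_wpM2l => //.
  by apply: lerXn2r; rewrite ?nnegrE // (le_trans (p_ge0 z)).
by rewrite -mulr_suml sum_p mul1r.
Qed.

End WalshAnalysis.

Lemma prob_all_equalE (R : realFieldType) n (f : BV n -> bool) t :
  prob_all_equal R f t = \sum_(z : BV n) (NW R f z ^+ 2) ^+ t.+1.
Proof.
rewrite /prob_all_equal (partition_big (fun s : {ffun 'I_t.+1 -> BV n} => s ord0) xpredT) //=.
apply: eq_bigr => z _; rewrite (big_pred1 [ffun=> z]) => [|s /=].
  by under eq_bigr do rewrite ffunE; rewrite prodr_const card_ord.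
apply/idP/eqP => [/andP[/forallP all_eq /eqP s0]|->].
  by apply/ffunP => i; rewrite ffunE -s0; apply/eqP/all_eq.
by rewrite ffunE eqxx andbT; apply/forallP => i; rewrite !ffunE.
Qed.

Theorem mainTheorem4 (R : realFieldType) (n : nat) (eps : R) (t : nat)
  (f : BV n -> bool)
  (hn : (1 <= n)%N) (heps0 : 0 <= eps) (heps1 : eps < 2%:R^-1) (ht : (1 <= t)%N)
  (hfar : eps_far f eps) :
  prob_all_equal R f t <= (1 - 2%:R * eps) ^+ t /\
  (* the test "report not affine iff some a^(i) <> a^(0)" never errs on affine g *)
  (forall (a0 : bool) (a : BV n), prob_all_equal R (affine_fun a0 a) t = 1).
Proof.
split=> [|a0 a]; rewrite prob_all_equalE.
  set q := 1 - 2%:R * eps.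
  have q_ge0 : 0 <= q by rewrite /q; lra.
  have q_le1 : q <= 1 by rewrite /q; lra.
  apply: (le_trans (collision_bound _ _ _ (parseval R f))) => [z|z|].
  - exact: sqr_ge0.
  - exact: NW_far_bound.
  by apply: lerXn2r; rewrite ?nnegrE ?exprn_ge0 // expr2 ler_piMr.
under eq_bigr do rewrite NW_affine.
rewrite (bigD1 a) //= eqxx expr1n big1 ?addr0 // => z hz.
by rewrite eq_sym (negbTE hz) expr0n.
Qed.
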